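(* Let $g$ be a non-negative concave (differentiable) function on $(0,\infty)$ and fix $x>0$. Define $E(\alpha)=g(\alpha)\,g(x/\alpha)$ for $\alpha>0$. Suppose $\lim_{\alpha\to0^+}E(\alpha)=\lim_{\alpha\to+\infty}E(\alpha)=0$ and that $T_0(t)=t g'(t)/g(t)$ is one-to-one on $(0,\infty)$. Then $E$ attains its unique global maximum at $\alpha=\sqrt{x}$. *)

From Stdlib Require Import Reals.
From Coquelicot Require Import Coquelicot.
Open Scope R_scope.

Definition concave_on_pos (g : R -> R) : Prop :=
  forall a b t : R, 0 < a -> 0 < b -> 0 <= t <= 1 ->
    t * g a + (1 - t) * g b <= g (t * a + (1 - t) * b).

Definition Efun (g : R -> R) (x alpha : R) : R := g alpha * g (x / alpha).

Definition T0 (g : R -> R) (t : R) : R := t * Derive g t / g t.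

From Stdlib Require Import Reals Lra.
From Coquelicot Require Import Coquelicot.
Open Scope R_scope.

(* A non-negative concave function that vanishes somewhere on (0, +oo) vanishes
   everywhere there, and then T0 is constant; so injectivity of T0 forces g > 0.
   A direct computation gives E'(c) = E(c)/c * (T0 c - T0 (x/c)), hence
   E'(c) = 0 only when c = x/c, i.e. c = sqrt x.  For 0 < a < sqrt x with
   E(sqrt x) <= E(a), the limit E -> 0 at 0+ and the intermediate value theorem
   give z <= a with E(z) = E(sqrt x), and the mean value theorem on
   [z, sqrt x] produces a critical point below sqrt x.  The case a > sqrt x
   reduces to this one through the symmetry E(x/a) = E(a). *)

Lemma concave_nonneg_eq0 (g : R -> R) (t0 : R) :
  (forall t, 0 < t -> 0 <= g t) -> concave_on_pos g ->
  0 < t0 -> g t0 = 0 -> forall t, 0 < t -> g t = 0.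
Proof.
  intros g_ge0 g_cvx t0_gt0 g_t0 t t_gt0.
  (* t0 is a convex combination of t and t0^2/t, on whichever side of t0 t lies *)
  assert (s_gt0 : 0 < t0 ^ 2 / t) by (apply Rdiv_lt_0_compat; nra).
  assert (w_gt0 : 0 < t0 / (t + t0)) by (apply Rdiv_lt_0_compat; lra).
  assert (w'_gt0 : 0 < t / (t + t0)) by (apply Rdiv_lt_0_compat; lra).
  assert (w_sum : t0 / (t + t0) + t / (t + t0) = 1) by (field; lra).
  pose proof (g_cvx t (t0 ^ 2 / t) (t0 / (t + t0)) t_gt0 s_gt0 ltac:(lra))
    as g_comb.
  replace (t0 / (t + t0) * t + (1 - t0 / (t + t0)) * (t0 ^ 2 / t)) with t0
    in g_comb by (field; lra).
  replace (1 - t0 / (t + t0)) with (t / (t + t0)) in g_comb by (field; lra).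
  pose proof (g_ge0 t t_gt0); pose proof (g_ge0 _ s_gt0).
  assert (0 <= t / (t + t0) * g (t0 ^ 2 / t)) by (apply Rmult_le_pos; lra).
  assert (t0 / (t + t0) * g t <= 0) by (rewrite g_t0 in g_comb; lra).
  nra.
Qed.

Lemma pos_of_T0_injective (g : R -> R) :
  (forall t, 0 < t -> 0 <= g t) -> concave_on_pos g ->
  (forall s t, 0 < s -> 0 < t -> T0 g s = T0 g t -> s = t) ->
  forall t, 0 < t -> 0 < g t.
Proof.
  intros g_ge0 g_cvx T0_inj t t_gt0.
  destruct (g_ge0 t t_gt0) as [|g_t]; [assumption | exfalso].
  pose proof (concave_nonneg_eq0 g t g_ge0 g_cvx t_gt0 (eq_sym g_t)) as g_eq0.
  (* with g = 0, T0 g = 0 because / 0 = 0 *)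
  enough (1 = 2) by lra.
  apply T0_inj; try lra.
  unfold T0; rewrite (g_eq0 1), (g_eq0 2) by lra.
  unfold Rdiv; rewrite Rinv_0; ring.
Qed.

Lemma Efun_div (g : R -> R) (x a : R) :
  x <> 0 -> a <> 0 -> Efun g x (x / a) = Efun g x a.
Proof.
  intros; unfold Efun.
  replace (x / (x / a)) with a by (field; auto).
  apply Rmult_comm.
Qed.

Lemma lt_of_derive_neq0 (f f' : R -> R) (m : R) :
  0 < f m ->
  (forall c, 0 < c <= m -> is_derive f c (f' c)) ->
  (forall c, 0 < c < m -> f' c <> 0) ->
  filterlim f (at_right 0) (locally 0) ->
  forall a, 0 < a < m -> f a < f m.
Proof.
  intros fm_gt0 f_der f'_neq0 f_lim0 a a_bounds.
  destruct (Rlt_or_le (f a) (f m)) as [|fm_le]; [assumption | exfalso].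
  assert (f_cont : forall c, 0 < c <= m -> continuity_pt f c).
  { intros c c_bounds; apply derivable_continuous_pt.
    exists (f' c); apply is_derive_Reals, f_der, c_bounds. }
  assert (exists y, 0 < y /\ y < a /\ f y < f m) as [y [y_gt0 [y_lt_a fy_lt]]].
  { assert (near_a : at_right 0 (fun t => 0 < t < a)).
    { exists (mkposreal a (proj1 a_bounds)); intros t t_ball t_gt0; split; [assumption |].
      unfold ball in t_ball; simpl in t_ball.
      unfold AbsRing_ball, abs, minus, plus, opp in t_ball; simpl in t_ball.
      rewrite Ropp_0, Rplus_0_r, Rabs_pos_eq in t_ball; lra. }
    assert (near_small : at_right 0 (fun t => Rabs (f t) < f m)).
    { apply (f_lim0 (fun u => Rabs u < f m)).
      exists (mkposreal _ fm_gt0); intros u.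
      unfold ball; simpl; unfold AbsRing_ball, abs, minus, plus, opp; simpl.
      rewrite Ropp_0, Rplus_0_r; tauto. }
    destruct (@filter_ex _ (at_right 0) (at_right_proper_filter 0) _
                (filter_and _ _ near_a near_small)) as [t [t_bounds ft_small]].
    exists t; pose proof (Rle_abs (f t)); repeat split; lra. }
  assert (exists z, y <= z <= a /\ f z = f m) as [z [z_bounds fz]].
  { destruct fm_le as [fm_lt | fm_eq]; [| exists a; split; [lra | auto]].
    destruct (Ranalysis5.IVT_interv (fun t => f t - f m) y a) as [z [z_bounds fz]];
      try lra.
    - intros c c_bounds; apply continuity_pt_minus; [apply f_cont; lra |].
      apply continuity_pt_const; intros ? ?; reflexivity.
    - exists z; split; [assumption | lra]. }
  destruct (MVT_cor2 f f' z m) as [c [f_diff c_bounds]]; [lra | |].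
  - intros c c_bounds; apply is_derive_Reals, f_der; lra.
  - apply (f'_neq0 c); [lra |].
    apply (Rmult_eq_reg_r (m - z)); lra.
Qed.

Section Product.

Variables (g : R -> R) (x : R).
Hypothesis x_gt0 : 0 < x.
Hypothesis g_gt0 : forall t, 0 < t -> 0 < g t.
Hypothesis g_der : forall t, 0 < t -> ex_derive g t.

Definition Efun_deriv (c : R) : R := Efun g x c / c * (T0 g c - T0 g (x / c)).

Lemma Efun_gt0 (a : R) : 0 < a -> 0 < Efun g x a.
Proof.
  intros a_gt0; apply Rmult_lt_0_compat; apply g_gt0; [| apply Rdiv_lt_0_compat]; lra.
Qed.

Lemma is_derive_Efun (c : R) : 0 < c ->
  is_derive (Efun g x) c (Efun_deriv c).
Proof.
  intros c_gt0.
  assert (xc_gt0 : 0 < x / c) by (apply Rdiv_lt_0_compat; lra).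
  pose proof (g_gt0 c c_gt0); pose proof (g_gt0 _ xc_gt0).
  unfold Efun_deriv, Efun, T0; auto_derive.
  - repeat split; try apply g_der; lra.
  - change (fun y => g y) with g; unfold Rdiv; field; lra.
Qed.

Section Critical.

Hypothesis T0_inj : forall s t, 0 < s -> 0 < t -> T0 g s = T0 g t -> s = t.

Lemma Efun_deriv_eq0 (c : R) : 0 < c -> Efun_deriv c = 0 -> c = sqrt x.
Proof.
  intros c_gt0 dE0.
  assert (xc_gt0 : 0 < x / c) by (apply Rdiv_lt_0_compat; lra).
  assert (c_eq : c = x / c).
  { apply T0_inj; [lra | lra |].
    destruct (Rmult_integral _ _ dE0) as [E0 | T0_eq]; [| lra].
    enough (0 < Efun g x c / c) by lra.
    apply Rdiv_lt_0_compat; [apply Efun_gt0 |]; lra. }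
  rewrite <- (sqrt_square c) by lra.
  f_equal; rewrite c_eq at 2; field; lra.
Qed.

Lemma Efun_lt_sqrt (a : R) :
  filterlim (Efun g x) (at_right 0) (locally 0) ->
  0 < a < sqrt x -> Efun g x a < Efun g x (sqrt x).
Proof.
  intros E_lim0 a_bounds.
  apply (lt_of_derive_neq0 _ Efun_deriv); try assumption.
  - apply Efun_gt0, sqrt_lt_R0, x_gt0.
  - intros c c_bounds; apply is_derive_Efun; lra.
  - intros c c_bounds dE0; apply Efun_deriv_eq0 in dE0; lra.
Qed.

End Critical.

End Product.

Theorem lemma20 (g : R -> R) (x : R) :
  (forall t, 0 < t -> 0 <= g t) ->
  concave_on_pos g ->
  (forall t, 0 < t -> ex_derive g t) ->
  0 < x ->
  filterlim (Efun g x) (at_right 0) (locally 0) ->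
  filterlim (Efun g x) (Rbar_locally p_infty) (locally 0) ->
  (forall s t, 0 < s -> 0 < t -> T0 g s = T0 g t -> s = t) ->
  forall alpha, 0 < alpha -> alpha <> sqrt x ->
    Efun g x alpha < Efun g x (sqrt x).
Proof.
  intros g_ge0 g_cvx g_der x_gt0 E_lim0 _ T0_inj a a_gt0 a_neq.
  pose proof (pos_of_T0_injective g g_ge0 g_cvx T0_inj) as g_gt0.
  assert (sqrt_sqr : sqrt x * sqrt x = x) by (apply sqrt_sqrt; lra).
  assert (sqrt_gt0 : 0 < sqrt x) by (apply sqrt_lt_R0; lra).
  destruct (Rtotal_order a (sqrt x)) as [a_lt | [a_eq | a_gt]]; [| contradiction |].
  - apply Efun_lt_sqrt; auto.
  - rewrite <- Efun_div by lra.
    apply Efun_lt_sqrt; auto; split.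
    + apply Rdiv_lt_0_compat; lra.
    + apply (Rmult_lt_reg_r a); [lra |].
      unfold Rdiv; rewrite Rmult_assoc, Rinv_l by lra; nra.
Qed.
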